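(* Let $V:\mathbb{R}\to\mathbb{R}$ be $1$-periodic and four times continuously differentiable, and $n\ge3$. Let $H_1$ be the $n\times n$ matrix $n^2$ times the periodic second-difference matrix (diagonal entries $2$, entries $-1$ at positions $(k,k\pm1)$ taken cyclically, i.e. including $(1,n)$ and $(n,1)$), let $H_2=\operatorname{diag}(V(0),V(1/n),\dots,V((n-1)/n))$, and let $D_1$ be the $n\times n$ matrix with $(D_1\vec v)_0=n(v_{n-1}-v_0)$ and $(D_1\vec v)_k=n(v_{k-1}-v_k)$ for $1\le k\le n-1$ (indices $0,\dots,n-1$). Then $H_1=D_1^\dagger D_1$, and there exist constants $\widetilde C_1,\widetilde C_2$ depending on $V$ but not on $n$ such that for every $\vec v\in\mathbb{C}^n$: $$\|[H_1,H_2]\vec v\|_\star\le\widetilde C_1(\|D_1\vec v\|_\star+\|\vec v\|_\star),\qquad \|[H_1,[H_1,H_2]]\vec v\|_\star\le\widetilde C_2(\|H_1\vec v\|_\star+\|\vec v\|_\star).$$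
   Context: The rescaled 2-norm is $\|\vec v\|_\star=n^{-1/2}\|\vec v\|$ where $\|\cdot\|$ is the Euclidean norm. $[A,B]=AB-BA$. This is the central finite-difference discretization with $n$ equidistant nodes $x_k=k/n$ on $[0,1]$ with periodic boundary conditions. *)

From mathcomp Require Import all_boot all_algebra all_classical all_reals all_analysis.
From mathcomp Require Import complex.
Import GRing.Theory Num.Theory numFieldNormedType.Exports.
Local Open Scope ring_scope.
Local Open Scope complex_scope.

Set Implicit Arguments.
Unset Strict Implicit.
Unset Printing Implicit Defensive.

Definition C4 (R : realType) (V : R -> R) : Prop :=
  (forall k : nat, (k < 4)%N -> forall x : R, derivable (derive1n k V) x 1)
  /\ continuous (derive1n 4 V : R -> R).

Definition one_periodic (R : realType) (V : R -> R) : Prop :=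
  forall x : R, V (x + 1) = V x.

Definition H1 (R : realType) (n : nat) : 'M[R[i]]_n :=
  \matrix_(i < n, j < n)
    ((n%:R ^+ 2) * (2%:R * (i == j :> nat)%:R
                    - ((j : nat) == (i.+1 %% n)%N)%:R
                    - ((j : nat) == ((i + n).-1 %% n)%N)%:R)).

Definition H2 (R : realType) (V : R -> R) (n : nat) : 'M[R[i]]_n :=
  \matrix_(i < n, j < n) ((i == j :> nat)%:R * (V ((i : nat)%:R / n%:R))%:C).

Definition D1 (R : realType) (n : nat) : 'M[R[i]]_n :=
  \matrix_(i < n, j < n)
    (n%:R * (((j : nat) == ((i + n).-1 %% n)%N)%:R - (i == j :> nat)%:R)).

Definition adjoint (R : realType) (n : nat) (A : 'M[R[i]]_n) : 'M[R[i]]_n :=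
  map_mx (@conjc R) A^T.

Definition comm (R : realType) (n : nat) (A B : 'M[R[i]]_n) : 'M[R[i]]_n :=
  A *m B - B *m A.

Definition normstar (R : realType) (n : nat) (v : 'cV[R[i]]_n) : R :=
  Num.sqrt (n%:R^-1 * \sum_(k < n) (complex.Re (v k 0) ^+ 2 + complex.Im (v k 0) ^+ 2)).

(* Both commutators are banded.  The i-th entry of [H1,H2] v is a combination
   of (D1 v)_(i+1), (D1 v)_i and v_(i-1), and that of [H1,[H1,H2]] v one of nine
   neighbouring entries of H1 v, D1 v and v; the coefficients are the scaled
   differences n^k Delta^k V(j/n), Delta the forward difference of step 1/n and
   k <= 4.  By periodicity and the mean value theorem these are bounded by a
   bound M of |V^(k)| on [0, 2].  Cauchy-Schwarz over the terms, invariance of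
   the l2 norm under cyclic shifts and
   |D1 v|^2 = <v, H1 v> <= (|v|^2 + |H1 v|^2) / 2
   then give the estimates with C1 = sqrt 6 M and C2 = sqrt 54 M. *)

From mathcomp Require Import all_boot all_algebra all_classical all_reals all_analysis.
From mathcomp Require Import complex.
From mathcomp Require Import ring lra zify.
Import GRing.Theory Num.Theory order.Order.TTheory numFieldNormedType.Exports.
Local Open Scope ring_scope.
Local Open Scope classical_set_scope.
Local Open Scope complex_scope.

Set Implicit Arguments.
Unset Strict Implicit.
Unset Printing Implicit Defensive.

Local Notation normc := Normc.normc.

Fixpoint iter_diff (S : Type) (T : zmodType) (sigma : S -> S) (k : nat)
    (g : S -> T) : S -> T :=
  if k is k'.+1 then fun x => iter_diff sigma k' g (sigma x) - iter_diff sigma k' g x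
  else g.

Lemma iter_diff_map (S : Type) (T U : zmodType) (F : {additive T -> U})
    (sigma : S -> S) k (g : S -> T) x :
  F (iter_diff sigma k g x) = iter_diff sigma k (F \o g) x.
Proof. by elim: k x => [|k IHk] x //=; rewrite raddfB !IHk. Qed.

Lemma iter_diff_comp (S1 S2 : Type) (T : zmodType) (sigma1 : S1 -> S1)
    (sigma2 : S2 -> S2) (phi : S1 -> S2) (g : S2 -> T) k :
  (forall m x, iter_diff sigma2 m g (phi (sigma1 x))
               = iter_diff sigma2 m g (sigma2 (phi x))) ->
  forall x, iter_diff sigma1 k (g \o phi) x = iter_diff sigma2 k g (phi x).
Proof. by move=> comm; elim: k => [|k IHk] x //=; rewrite !IHk comm. Qed.

Section RealDifferences.
Variables (R : realType) (h : R).
Local Notation diff := (iter_diff (shift h)).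

Lemma iter_diff_periodic (f : R -> R) k :
  one_periodic f -> one_periodic (diff k f).
Proof.
move=> per; elim: k => [|k IHk] x //=.
by rewrite addrAC !IHk.
Qed.

Lemma is_derive_iter_diff (f df : R -> R) (k : nat) (x : R) :
  (forall y : R, is_derive y 1 f (df y)) -> is_derive x 1 (diff k f) (diff k df x).
Proof.
move=> dfP; elim: k x => [|k IHk] x; first exact: dfP.
have -> : diff k.+1 f = diff k f \o shift h - diff k f by [].
apply: (is_deriveB (df := diff k df (x + h))).
rewrite -[diff k df _]mulr1.
by apply: is_derive1_comp; exact: is_derive_shift.
Qed.

Lemma iter_diff_le (f : R -> R) k a b M :
  0 <= h ->
  (forall j, (j < k)%N -> forall x, derivable f^`(j) x 1) ->
  (forall x, a <= x <= b -> `|f^`(k) x| <= M) ->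
  forall y, a <= y -> y + k%:R * h <= b -> `|diff k f y| <= M * h ^+ k.
Proof.
elim: k f => [|k IHk] f h0 df fM y ay yb.
  by rewrite expr0 mulr1; apply: fM; rewrite ay; move: yb; rewrite mul0r addr0.
have f'P (y' : R) : is_derive y' 1 f (f^`() y').
  by rewrite derive1E; apply: derivableP; exact: (df 0%N).
have yyh : y <= y + h by rewrite lerDl.
have [|c] := MVT_segment yyh (fun x _ => is_derive_iter_diff k x f'P).
  apply: derivable_within_continuous => x _.
  by have [] := is_derive_iter_diff k x f'P.
rewrite in_itv /= => /andP[yc ch] /= ->.
rewrite addrAC subrr add0r normrM (ger0_norm h0) exprSr mulrA ler_wpM2r //.
apply: (IHk _ h0) (le_trans ay yc) _.
- by move=> j jk x; rewrite -derive1Sn; apply: df.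
- by move=> x xab; rewrite -derive1Sn; apply: fM.
- by apply: le_trans yb; rewrite -addn1 natrD mulrDl mul1r; lra.
Qed.

End RealDifferences.

Lemma continuous_bounded_itv (R : realType) (f : R -> R) (a b : R) :
  continuous f -> exists M, forall x, a <= x <= b -> `|f x| <= M.
Proof.
move=> cf; have [ab|ba] := leP a b; last by exists 0 => x; lra.
have cnf : {within `[a, b], continuous (fun x => `|f x|)}.
  apply: continuous_subspaceT => x.
  exact: continuous_comp (cf x) (@norm_continuous _ _ _).
have [c _ cP] := EVT_max ab cnf.
by exists `|f c| => x xab; apply: cP; rewrite in_itv.
Qed.

Lemma bounded_derive1n (R : realType) (f : R -> R) (m : nat) (a b : R) :
  (forall k, (k <= m)%N -> continuous f^`(k)) ->
  exists M, forall k, (k <= m)%N -> forall x, a <= x <= b -> `|f^`(k) x| <= M.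
Proof.
elim: m => [|m IHm] cf.
  have [M fM] := continuous_bounded_itv a b (cf 0%N isT).
  by exists M => -[|//] _.
have [M1 M1P] := IHm (fun k km => cf k (leqW km)).
have [M2 M2P] := continuous_bounded_itv a b (cf m.+1 (leqnn _)).
exists (Num.max M1 M2) => k; rewrite leq_eqVlt ltnS => /predU1P[-> | km] x xab.
  by rewrite le_max M2P ?orbT.
by rewrite le_max M1P.
Qed.

Lemma C4_continuous_derive1n (R : realType) (V : R -> R) :
  C4 V -> forall k, (k <= 4)%N -> continuous V^`(k).
Proof.
move=> [dV cV] k; rewrite leq_eqVlt ltnS => /predU1P[-> // | k3] x.
exact/differentiable_continuous/derivable1_diffP/dV.
Qed.

Section Grid.
Variables (R : realType) (n : nat).

Definition grid (j : 'I_n) : R := (j : nat)%:R / n%:R.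

Lemma periodic_grid_ordS (f : R -> R) (j : 'I_n) :
  one_periodic f -> f (grid (ordS j)) = f (grid j + n%:R^-1).
Proof.
move=> per; have n0 : (n%:R : R) != 0 by rewrite pnatr_eq0; have := ltn_ord j; lia.
rewrite /grid /=; case: (ltnP j.+1 n) => jn.
  by rewrite modn_small // -addn1 natrD mulrDl mul1r.
have jn' : j.+1 = n by have := ltn_ord j; lia.
rewrite -[X in _ + X]mul1r -mulrDl natr1 jn' modnn divff // mul0r.
by rewrite -[1]add0r per.
Qed.

Lemma iter_diff_grid (f : R -> R) (k : nat) (j : 'I_n) : one_periodic f ->
  iter_diff (@ordS n) k (f \o grid) j = iter_diff (shift n%:R^-1) k f (grid j).
Proof.
move=> per; apply: iter_diff_comp => m x /=.
exact/periodic_grid_ordS/iter_diff_periodic.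
Qed.

(* For k <= 4 and n >= 3 the difference at [grid j] only samples f on
   [0, (n + 3) / n], a subset of [0, 2]. *)
Lemma iter_diff_grid_le (f : R -> R) k M (j : 'I_n) :
  (3 <= n)%N -> (k <= 4)%N -> one_periodic f ->
  (forall i, (i < k)%N -> forall x, derivable f^`(i) x 1) ->
  (forall x, 0 <= x <= 2 -> `|f^`(k) x| <= M) ->
  `|n%:R ^+ k * iter_diff (@ordS n) k (f \o grid) j| <= M.
Proof.
move=> n3 k4 per df fM.
have n0 : (0 : R) < n%:R by rewrite ltr0n; lia.
have := @iter_diff_le R n%:R^-1 f k 0 2 M _ df fM (grid j).
rewrite iter_diff_grid // normrM normrX normr_nat invr_ge0 ltW //.
have gj0 : 0 <= grid j by rewrite divr_ge0.
move=> /(_ isT gj0) le_diff; rewrite -(mulfK (expf_neq0 k (lt0r_neq0 n0)) M).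
rewrite [X in _ <= X]mulrAC [X in _ <= X]mulrC -exprVn.
rewrite ler_wpM2l ?exprn_ge0 ?(ltW n0) // le_diff //.
rewrite /grid -mulrDl ler_pdivrMr // -natrD -natrM ler_nat.
by have := ltn_ord j; lia.
Qed.

End Grid.

Lemma sum_delta (T : finType) (U : pzSemiRingType) (a : T) (F : T -> U) :
  \sum_j (j == a)%:R * F j = F a.
Proof.
rewrite (bigD1 a) //= eqxx mul1r big1 ?addr0 // => j /negbTE ->.
by rewrite mul0r.
Qed.

Lemma mxBE (U : zmodType) m k (A B : 'M[U]_(m, k)) i j :
  (A - B) i j = A i j - B i j.
Proof. by rewrite !mxE. Qed.

Section Matrices.
Variables (R : realType) (n : nat).
Implicit Types (i j k : 'I_n) (v : 'cV[R[i]]_n).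
Local Notation s := (@ordS n).
Local Notation p := (@ord_pred n).

Lemma eq_ord_pred i k : (i == p k) = (k == s i).
Proof. by apply/eqP/eqP => [->|->]; rewrite ?ord_predK ?ordSK. Qed.

Lemma H1E i j : H1 R n i j =
  n%:R ^+ 2 * (2%:R * (i == j)%:R - (j == s i)%:R - (j == p i)%:R).
Proof. by rewrite mxE. Qed.

Lemma D1E i j : D1 R n i j = n%:R * ((j == p i)%:R - (i == j)%:R).
Proof. by rewrite mxE. Qed.

Lemma H2E (V : R -> R) i j : H2 V n i j = (i == j)%:R * (V (grid R i))%:C.
Proof. by rewrite mxE. Qed.

Lemma H1_mulE v i :
  (H1 R n *m v) i 0 = n%:R ^+ 2 * (2%:R * v i 0 - v (s i) 0 - v (p i) 0).
Proof.
rewrite mxE; transitivity (\sum_j (n%:R ^+ 2 * 2%:R * ((j == i)%:R * v j 0)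
  - n%:R ^+ 2 * ((j == s i)%:R * v j 0) - n%:R ^+ 2 * ((j == p i)%:R * v j 0))).
  by apply: eq_bigr => j _; rewrite H1E [i == j]eq_sym; ring.
by rewrite !sumrB -!mulr_sumr !sum_delta; ring.
Qed.

Lemma D1_mulE v i : (D1 R n *m v) i 0 = n%:R * (v (p i) 0 - v i 0).
Proof.
rewrite mxE -(sum_delta i (fun j => v j 0)) -(sum_delta (p i) (fun j => v j 0)).
rewrite -sumrB mulr_sumr; apply: eq_bigr => j _.
by rewrite D1E [i == j]eq_sym; ring.
Qed.

Lemma H2_mulE (V : R -> R) v i : (H2 V n *m v) i 0 = (V (grid R i))%:C * v i 0.
Proof.
rewrite mxE -(sum_delta i (fun j => v j 0)) mulr_sumr; apply: eq_bigr => j _.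
by rewrite H2E [i == j]eq_sym; ring.
Qed.

Lemma adjointE (A : 'M[R[i]]_n) i j : adjoint A i j = (A j i)^*.
Proof. by rewrite !mxE. Qed.

Lemma H1_adjointD1 : H1 R n = adjoint (D1 R n) *m D1 R n.
Proof.
apply/matrixP => i j; rewrite H1E mxE.
transitivity (\sum_k (n%:R ^+ 2 : R[i]) * ((k == s i)%:R * (k == s j)%:R
   - (k == s i)%:R * (k == j)%:R - (k == i)%:R * (k == s j)%:R
   + (k == i)%:R * (k == j)%:R)); last first.
  apply: eq_bigr => k _; rewrite adjointE !D1E !eq_ord_pred.
  by rewrite rmorphM rmorphB !rmorph_nat [k == i]eq_sym; ring.
rewrite -mulr_sumr big_split /= !sumrB !sum_delta.
rewrite (inj_eq (@ordS_inj _)) (eq_sym (s i) j) (eq_sym i (s j)) -eq_ord_pred.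
by rewrite [j == p i]eq_ord_pred [s j == i]eq_sym -eq_ord_pred; ring.
Qed.

End Matrices.

Section Commutators.
Variables (R : realType) (V : R -> R) (n : nat).
Implicit Types (i : 'I_n) (v : 'cV[R[i]]_n).
Local Notation s := (@ordS n).
Local Notation p := (@ord_pred n).

Definition grid_diffq k i : R[i] :=
  n%:R ^+ k * iter_diff s k (fun j => (V (grid R j))%:C) i.

Arguments grid_diffq : simpl never.
Local Notation q := grid_diffq.
Local Notation D v i := ((D1 R n *m v) i 0).
Local Notation H v i := ((H1 R n *m v) i 0).

Lemma comm_H1_H2_mulE v i :
  (comm (H1 R n) (H2 V n) *m v) i 0 =
  q 1 i * (D v (s i) + D v i) - q 2 (p i) * v (p i) 0.
Proof.
rewrite /comm mulmxBl -!mulmxA mxBE H1_mulE !H2_mulE H1_mulE !D1_mulE.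
by rewrite /q /grid_diffq /= ord_predK ordSK; ring.
Qed.

Lemma comm_H1_comm_H1_H2_mulE v i :
  (comm (H1 R n) (comm (H1 R n) (H2 V n)) *m v) i 0 =
  - q 2 (p i) * (H v (s i) + 2%:R * H v i + H v (p i))
  - q 3 (p i) * (D v (s (s i)) + D v (s i) + D v i + D v (p i))
  + q 4 (p (p i)) * v (p (p i)) 0.
Proof.
rewrite {1}/comm mulmxBl -!mulmxA mxBE [in LHS]H1_mulE !comm_H1_H2_mulE.
by rewrite /q /grid_diffq /= !D1_mulE !H1_mulE !ord_predK !ordSK; ring.
Qed.

End Commutators.

Lemma sqr_sum_le (R : realFieldType) (s : seq R) :
  (\sum_(x <- s) x) ^+ 2 <= (size s)%:R * \sum_(x <- s) x ^+ 2.
Proof.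
set Q := \sum_(x <- s) x ^+ 2.
have sum_const (c : R) : \sum_(x <- s) c = c * (size s)%:R.
  by rewrite -sum1_size natr_sum mulr_sumr; apply: eq_bigr => _ _; rewrite mulr1.
have -> : (size s)%:R * Q = \sum_(x <- s) \sum_(y <- s) (x ^+ 2 + y ^+ 2) / 2.
  transitivity (\sum_(x <- s) (x ^+ 2 / 2 * (size s)%:R + Q / 2)).
    by rewrite big_split /= -mulr_suml sum_const -mulr_suml -/Q; field.
  apply: eq_bigr => x _; rewrite -sum_const /Q mulr_suml -big_split /=.
  by apply: eq_bigr => y _; rewrite mulrDl.
rewrite expr2 mulr_suml; apply: ler_sum => x _.
rewrite mulr_sumr; apply: ler_sum => y _.
by have := sqr_ge0 (x - y); nra.
Qed.

Lemma sqrtrD_le (R : rcfType) (x y : R) : 0 <= x -> 0 <= y ->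
  Num.sqrt (x + y) <= Num.sqrt x + Num.sqrt y.
Proof.
move=> x0 y0.
rewrite -(ler_pXn2r (n := 2)) ?nnegrE ?addr_ge0 ?sqrtr_ge0 //.
rewrite sqr_sqrtr ?addr_ge0 // sqrrD !sqr_sqrtr //.
have := mulr_ge0 (sqrtr_ge0 x) (sqrtr_ge0 y); lra.
Qed.

Section ComplexNorm.
Variable R : rcfType.
Implicit Types z : R[i].

Lemma normc_ge0 z : 0 <= normc z.
Proof. by case: z => a b; apply: sqrtr_ge0. Qed.

Lemma normc_sqr z : normc z ^+ 2 = complex.Re z ^+ 2 + complex.Im z ^+ 2.
Proof. by case: z => a b; rewrite /= sqr_sqrtr // addr_ge0 // sqr_ge0. Qed.

Lemma normc_sqrC z : (normc z ^+ 2)%:C = z^* * z.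
Proof.
rewrite normc_sqr; case: z => a b /=.
by apply/eqP; rewrite eq_complex /=; apply/andP; split; apply/eqP; ring.
Qed.

Lemma normcR (r : R) : normc r%:C = `|r|.
Proof. by rewrite /Normc.normc /= expr0n /= addr0 sqrtr_sqr. Qed.

Lemma normc_conj z : normc z^* = normc z.
Proof. by case: z => a b; rewrite /Normc.normc /= sqrrN. Qed.

Lemma normc_sum_le (I : Type) (r : seq I) (F : I -> R[i]) :
  normc (\sum_(t <- r) F t) <= \sum_(t <- r) normc (F t).
Proof.
elim: r => [|t r IHr]; first by rewrite !big_nil Normc.normc0.
by rewrite !big_cons (le_trans (le_normcD _ _)) // lerD2l.
Qed.

Lemma normc_sum_mul_le (r : seq (R[i] * R[i])) (M : R) :
  all (fun t => normc t.1 <= M) r ->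
  normc (\sum_(t <- r) t.1 * t.2) <= M * \sum_(t <- r) normc t.2.
Proof.
elim: r => [|t r IHr] /=; first by rewrite !big_nil Normc.normc0 mulr0.
move=> /andP[tM rM]; rewrite !big_cons mulrDr (le_trans (le_normcD _ _)) //.
by rewrite lerD ?IHr // Normc.normcM ler_wpM2r ?normc_ge0.
Qed.

End ComplexNorm.

Section SquaredNorm.
Variables (R : realType) (n : nat).
Implicit Types (u v w : 'cV[R[i]]_n).

Definition sqnorm v : R := \sum_k normc (v k 0) ^+ 2.

Lemma sqnorm_ge0 v : 0 <= sqnorm v.
Proof. by apply: sumr_ge0 => k _; apply: sqr_ge0. Qed.

Lemma normstarE v : normstar v = Num.sqrt (n%:R^-1 * sqnorm v).
Proof. by congr (Num.sqrt (_ * _)); apply: eq_bigr => k _; rewrite normc_sqr. Qed.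

Lemma normstar_le w u v K : 0 <= K ->
  sqnorm w <= K * (sqnorm u + sqnorm v) ->
  normstar w <= Num.sqrt K * (normstar u + normstar v).
Proof.
move=> K0 wuv; have n0 : 0 <= n%:R^-1 :> R by rewrite invr_ge0.
have u0 := sqnorm_ge0 u; have v0 := sqnorm_ge0 v.
rewrite !normstarE.
apply: (@le_trans _ _ (Num.sqrt (K * (n%:R^-1 * sqnorm u + n%:R^-1 * sqnorm v)))).
  by rewrite ler_wsqrtr // -mulrDr mulrCA ler_wpM2l.
by rewrite sqrtrM // ler_wpM2l ?sqrtr_ge0 // sqrtrD_le // mulr_ge0.
Qed.

Lemma sqnorm_shift (sigma : 'I_n -> 'I_n) v :
  injective sigma -> sqnorm (\col_k v (sigma k) 0) = sqnorm v.
Proof.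
move=> sigma_inj; rewrite /sqnorm [RHS](reindex_inj sigma_inj).
by apply: eq_bigr => k _; rewrite mxE.
Qed.

Local Notation term := (('I_n -> R[i]) * 'cV[R[i]]_n)%type.

Lemma sqnorm_le_banded (terms : seq term) w M :
  (forall i, w i 0 = \sum_(t <- terms) t.1 i * t.2 i 0) ->
  (forall i, all (fun t => normc (t.1 i) <= M) terms) ->
  sqnorm w <= (size terms)%:R * M ^+ 2 * \sum_(t <- terms) sqnorm t.2.
Proof.
move=> wE termsM; rewrite /sqnorm exchange_big mulr_sumr; apply: ler_sum => i _ /=.
pose a := map (fun t : term => normc (t.2 i 0)) terms.
have wM : normc (w i 0) <= M * \sum_(x <- a) x.
  pose pair_at (t : term) := (t.1 i, t.2 i 0).
  rewrite wE big_map -(big_map pair_at xpredT (fun t => t.1 * t.2)).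
  rewrite -(big_map pair_at xpredT (fun t => normc t.2)).
  by apply: normc_sum_mul_le; rewrite all_map; apply: termsM.
apply: (@le_trans _ _ ((M * \sum_(x <- a) x) ^+ 2)).
  by rewrite !expr2 ler_pM ?normc_ge0.
rewrite exprMn (mulrC (size terms)%:R) -[X in _ <= X]mulrA ler_wpM2l ?sqr_ge0 //.
by have := sqr_sum_le a; rewrite !big_map size_map.
Qed.

Lemma sqnorm_D1_le v :
  sqnorm (D1 R n *m v) <= (sqnorm v + sqnorm (H1 R n *m v)) / 2.
Proof.
have conjT (u : 'cV[R[i]]_n) k : (map_mx conjc u^T) 0 k = (u k 0)^* by rewrite !mxE.
have DvE : (sqnorm (D1 R n *m v))%:C = \sum_k (v k 0)^* * (H1 R n *m v) k 0.
  transitivity ((map_mx conjc (D1 R n *m v)^T *m (D1 R n *m v)) 0 0).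
    by rewrite rmorph_sum mxE; apply: eq_bigr => k _; rewrite conjT -normc_sqrC.
  rewrite trmx_mul map_mxM -mulmxA (mulmxA _ (D1 R n)).
  rewrite -[map_mx _ (D1 R n)^T]/(adjoint (D1 R n)) -H1_adjointD1 mxE.
  by apply: eq_bigr => k _; rewrite conjT.
rewrite -[sqnorm _]ger0_norm ?sqnorm_ge0 // -normcR DvE.
rewrite (le_trans (normc_sum_le _ _)) // /sqnorm -big_split /= mulr_suml.
apply: ler_sum => k _; rewrite Normc.normcM normc_conj.
by have := sqr_ge0 (normc (v k 0) - normc ((H1 R n *m v) k 0)); nra.
Qed.

End SquaredNorm.

Section Estimates.
Variables (R : realType) (V : R -> R) (M : R) (n : nat).
Hypotheses (per : one_periodic V) (n3 : (3 <= n)%N).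
Hypothesis dV : forall k, (k < 4)%N -> forall x, derivable V^`(k) x 1.
Hypothesis VM : forall k, (k <= 4)%N -> forall x, 0 <= x <= 2 -> `|V^`(k) x| <= M.
Local Notation s := (@ordS n).
Local Notation p := (@ord_pred n).
Local Notation q := (@grid_diffq R V n).

Lemma normc_grid_diffq_le k j : (k <= 4)%N -> normc (q k j) <= M.
Proof.
move=> k4; have -> : q k j = (n%:R ^+ k * iter_diff s k (V \o @grid R n) j)%:C.
  by rewrite rmorphM rmorphXn rmorph_nat (iter_diff_map (real_complex R)).
rewrite normcR iter_diff_grid_le //; last exact: VM.
by move=> i ik; apply: dV; apply: leq_trans ik k4.
Qed.

Lemma sqnorm_comm_H1_H2_le v :
  sqnorm (comm (H1 R n) (H2 V n) *m v)
    <= 6 * M ^+ 2 * (sqnorm (D1 R n *m v) + sqnorm v).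
Proof.
set d := D1 R n *m v.
apply: le_trans (sqnorm_le_banded (M := M) (terms :=
  [:: (q 1, \col_k d (s k) 0); (q 1, d); (fun i => - q 2 (p i), \col_k v (p k) 0)])
  _ _) _.
- by move=> i; rewrite comm_H1_H2_mulE !big_cons big_nil /= !mxE; ring.
- by move=> i /=; rewrite normcN !normc_grid_diffq_le.
rewrite !big_cons big_nil /= (sqnorm_shift _ (@ordS_inj n)).
rewrite (sqnorm_shift _ (@ord_pred_inj n)).
by have := mulr_ge0 (sqr_ge0 M) (sqnorm_ge0 v); lra.
Qed.

Lemma sqnorm_comm_H1_comm_H1_H2_le v :
  sqnorm (comm (H1 R n) (comm (H1 R n) (H2 V n)) *m v)
    <= 54 * M ^+ 2 * (sqnorm (H1 R n *m v) + sqnorm v).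
Proof.
set d := D1 R n *m v; set h := H1 R n *m v.
pose c2 i := - q 2 (p i); pose c3 i := - q 3 (p i).
apply: le_trans (sqnorm_le_banded (M := M) (terms :=
  [:: (c2, \col_k h (s k) 0); (c2, h); (c2, h); (c2, \col_k h (p k) 0);
      (c3, \col_k d (s (s k)) 0); (c3, \col_k d (s k) 0); (c3, d);
      (c3, \col_k d (p k) 0); (fun i => q 4 (p (p i)), \col_k v (p (p k)) 0)]) _ _) _.
- move=> i; rewrite comm_H1_comm_H1_H2_mulE !big_cons big_nil /= !mxE.
  by rewrite /c2 /c3; ring.
- by move=> i /=; rewrite !normcN !normc_grid_diffq_le.
rewrite !big_cons big_nil /= (sqnorm_shift _ (inj_comp (@ordS_inj n) (@ordS_inj n))).
rewrite (sqnorm_shift _ (inj_comp (@ord_pred_inj n) (@ord_pred_inj n))).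
rewrite !(sqnorm_shift _ (@ordS_inj n)) !(sqnorm_shift _ (@ord_pred_inj n)).
have := ler_wpM2l (sqr_ge0 M) (sqnorm_D1_le v).
by have := mulr_ge0 (sqr_ge0 M) (sqnorm_ge0 v); lra.
Qed.

End Estimates.

Theorem lemma8 (R : realType) (V : R -> R) :
  one_periodic V -> C4 V ->
  (forall n : nat, (3 <= n)%N -> H1 R n = adjoint (D1 R n) *m D1 R n) /\
  exists C1 C2 : R,
    forall n : nat, (3 <= n)%N -> forall v : 'cV[R[i]]_n,
      normstar (comm (H1 R n) (H2 V n) *m v)
        <= C1 * (normstar (D1 R n *m v) + normstar v) /\
      normstar (comm (H1 R n) (comm (H1 R n) (H2 V n)) *m v)
        <= C2 * (normstar (H1 R n *m v) + normstar v).
Proof.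
move=> per c4; split=> [n _|]; first exact: H1_adjointD1.
have [M VM] := bounded_derive1n 0 2 (C4_continuous_derive1n c4).
exists (Num.sqrt (6 * M ^+ 2)), (Num.sqrt (54 * M ^+ 2)) => n n3 v.
split; apply: normstar_le; rewrite ?(mulr_ge0 _ (sqr_ge0 M)) //.
- exact: sqnorm_comm_H1_H2_le per n3 c4.1 VM v.
- exact: sqnorm_comm_H1_comm_H1_H2_le per n3 c4.1 VM v.
Qed.
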